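(* Let $p>7$ be prime, $q=p^h$, $n>3$, and let $\mathcal{F}: aX^n+bY^n=Z^n$ be an irreducible Fermat curve defined over $\mathbb{F}_q$. If $\mathcal{F}$ is nonclassical with respect to either $\Sigma_1$ or $\Sigma_2$, then $\mathcal{F}$ is nonclassical with respect to $\Sigma_3$.
   Context: The function field of $\mathcal{F}$ over $\overline{\mathbb{F}}_q$ is $\overline{\mathbb{F}}_q(x,y)$ with $ax^n+by^n=1$. For $s\ge1$, $\Sigma_s$ is the linear system of all plane curves of degree $s$ and $M=\binom{s+2}{2}-1$. The order sequence $(\varepsilon_0,\dots,\varepsilon_M)$ of $\mathcal{F}$ with respect to $\Sigma_s$ is the lexicographically minimal increasing sequence of nonnegative integers such that $\det\big(D_t^{(\varepsilon_k)}(x^iy^j)\big)_{0\le k\le M,\ 0\le i+j\le s}\neq 0$, where $t$ is a separating variable and $D_t^{(r)}$ denotes the $r$-th Hasse derivative; equivalently, it is the common sequence, for all but finitely many $P\in\mathcal{F}$, of the $M+1$ distinct values $I(P,\mathcal{F}\cap\mathcal{C})$ for curves $\mathcal{C}$ of degree $s$. $\mathcal{F}$ is classical with respect to $\Sigma_s$ if $\varepsilon_i=i$ for all $i$, nonclassical otherwise. *)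

From HB Require Import structures.
From mathcomp Require Import all_boot all_order all_algebra all_field.
Set Implicit Arguments. Unset Strict Implicit. Unset Printing Implicit Defensive.
Import Order.TTheory GRing.Theory Num.Theory.
Local Open Scope ring_scope.

(* An algebraic closure of the prime field F_p (the algebraic closure of F_q). *)
Definition Fbar (p : nat) : countClosedFieldType :=
  projT1 (countable_algebraic_closure 'F_p).

Definition irreducible_elt (R : idomainType) (f : R) : Prop :=
  f != 0 /\ f \isn't a GRing.unit /\
  forall g h : R, f = g * h -> g \is a GRing.unit \/ h \is a GRing.unit.

(* The affine equation a X^n + b Y^n - 1 of the Fermat curve aX^n+bY^n=Z^n,
   as an element of K[X][Y] (outer variable Y, inner variable X). *)
Definition fermat_poly (K : fieldType) (a b : K) (n : nat) : {poly {poly K}} :=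
  (a%:P * 'X^n)%:P + (b%:P)%:P * 'X^n - 1.

Definition eval2 (K L : fieldType) (iota : {rmorphism K -> L})
  (P : {poly {poly K}}) (x y : L) : L :=
  (map_poly (fun c : {poly K} => (map_poly iota c).[x]) P).[y].

Definition generated_by (K L : fieldType) (iota : {rmorphism K -> L}) (x y : L)
  : Prop :=
  forall z : L, exists P Q : {poly {poly K}},
    eval2 iota Q x y != 0 /\ z = eval2 iota P x y / eval2 iota Q x y.

(* D = (D^{(r)})_r is the family of Hasse derivatives with respect to the
   separating variable x on L, over the constant field iota(K):
   a Hasse-Schmidt derivation that kills constants and with D^{(r)} x = [r = 1]
   for r >= 1. *)
Definition hasse_wrt (K L : fieldType) (iota : {rmorphism K -> L}) (x : L)
  (D : nat -> L -> L) : Prop :=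
  [/\ forall f, D 0%N f = f,
      forall r f g, D r (f + g) = D r f + D r g,
      forall r f g, D r (f * g) = \sum_(i < r.+1) D i f * D (r - i)%N g,
      forall r c, (0 < r)%N -> D r (iota c) = 0 &
      forall r, (0 < r)%N -> D r x = (r == 1%N)%:R].

(* The monomials x^i y^j with 0 <= i + j <= s. *)
Definition mons (s : nat) : seq (nat * nat) :=
  [seq (i, j) | i <- iota 0 s.+1, j <- iota 0 (s.+1 - i)].

Definition Mdim (s : nat) : nat := ('C(s.+2, 2)).-1.

Lemma size_mons1 : size (mons 1) = (Mdim 1).+1. Proof. by []. Qed.
Lemma size_mons2 : size (mons 2) = (Mdim 2).+1. Proof. by []. Qed.
Lemma size_mons3 : size (mons 3) = (Mdim 3).+1. Proof. by []. Qed.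

Definition wmat (L : fieldType) (D : nat -> L -> L) (x y : L) (s : nat)
  (eps : 'I_(Mdim s).+1 -> nat) : 'M[L]_((Mdim s).+1) :=
  \matrix_(k, c) D (eps k) (x ^+ (nth (0%N, 0%N) (mons s) c).1
                            * y ^+ (nth (0%N, 0%N) (mons s) c).2).

Definition increasing_seq (m : nat) (eps : 'I_m -> nat) : Prop :=
  forall i j : 'I_m, (i < j)%N -> (eps i < eps j)%N.

Definition lex_le (m : nat) (e1 e2 : 'I_m -> nat) : Prop :=
  (forall i, e1 i = e2 i) \/
  exists i : 'I_m, (e1 i < e2 i)%N /\ (forall j : 'I_m, (j < i)%N -> e1 j = e2 j).

(* eps is the order sequence of the curve w.r.t. Sigma_s *)
Definition is_order_seq (L : fieldType) (D : nat -> L -> L) (x y : L) (s : nat)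
  (eps : 'I_(Mdim s).+1 -> nat) : Prop :=
  [/\ increasing_seq eps, \det (wmat D x y eps) != 0 &
      forall eps', increasing_seq eps' -> \det (wmat D x y eps') != 0 ->
        lex_le eps eps'].

Definition classical (L : fieldType) (D : nat -> L -> L) (x y : L) (s : nat)
  : Prop :=
  is_order_seq D x y (fun k : 'I_(Mdim s).+1 => nat_of_ord k).

Definition nonclassical (L : fieldType) (D : nat -> L -> L) (x y : L) (s : nat)
  : Prop := ~ classical D x y s.

From HB Require Import structures.
From mathcomp Require Import all_boot all_order all_algebra all_field.
From mathcomp Require Import ring zify.
Import GRing.Theory.
Local Open Scope ring_scope.
Set Implicit Arguments. Unset Strict Implicit. Unset Printing Implicit Defensive.

(* Expand everything at the generic point of the curve in the local parameter t given
   by the Hasse derivatives.  The order sequence for Sigma_s is classical iff the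
   Wronskian of the monomials of degree <= s is invertible, i.e. iff no nonzero curve
   of degree s meets the generic point with multiplicity > M.  Differentiating
   a x^n + b y^n = 1 gives the linear equation u y + (1 - u) x y' = 0, u = a x^n, which
   determines the first Taylor coefficients of y as rational functions of nu = n and
   z = u / (1 - u).  Nonclassicality for lines forces y_2 = 0, i.e. nu = 1; for conics
   it forces a 3x3 minor of these coefficients to vanish, and that minor factors as
   (nu - 1)^4 (2 nu - 1)(nu - 2)(nu + 1) times a unit.  So n mod p is 1, 2, p - 1 or
   (p + 1)/2.  As p > 10, p-th powers are constant modulo t^10, so the curve agrees to
   order 10 with A x^r + B y^r = 1, r = n mod p, and in each of the four cases this
   yields a line, conic, hyperbola or parabola meeting the curve with multiplicity
   >= 10 > 9 = M for cubics.  If a = 0, y itself is constant. *)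

Section TruncatedEquality.
Variable R : comNzRingType.

Definition eqm (N : nat) (P Q : {poly R}) := forall k, (k < N)%N -> P`_k = Q`_k.

Lemma eqm_refl N P : eqm N P P. Proof. by []. Qed.

Lemma eqm_sym N P Q : eqm N P Q -> eqm N Q P.
Proof. by move=> h k hk; rewrite h. Qed.

Lemma eqm_trans N P Q S : eqm N P Q -> eqm N Q S -> eqm N P S.
Proof. by move=> h1 h2 k hk; rewrite h1 // h2. Qed.

Lemma eqm_le M N P Q : (M <= N)%N -> eqm N P Q -> eqm M P Q.
Proof. by move=> MN h k kM; apply: h; apply: leq_trans MN. Qed.

Lemma eqmD N P Q P' Q' : eqm N P P' -> eqm N Q Q' -> eqm N (P + Q) (P' + Q').
Proof. by move=> h1 h2 k hk; rewrite !coefD h1 // h2. Qed.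

Lemma eqmN N P P' : eqm N P P' -> eqm N (- P) (- P').
Proof. by move=> h k hk; rewrite !coefN h. Qed.

Lemma eqmM N P Q P' Q' : eqm N P P' -> eqm N Q Q' -> eqm N (P * Q) (P' * Q').
Proof.
move=> h1 h2 k hk; rewrite !coefM; apply: eq_bigr => -[i /= hi] _.
by rewrite h1 ?h2 //; apply: leq_ltn_trans hk; rewrite ?leq_subr.
Qed.

Lemma eqmX N P P' m : eqm N P P' -> eqm N (P ^+ m) (P' ^+ m).
Proof. by move=> h; elim: m => [|m IH] //; rewrite !exprS; apply: eqmM. Qed.

Lemma eqm_deriv N P Q : eqm N.+1 P Q -> eqm N P^`() Q^`().
Proof. by move=> h k hk; rewrite !coef_deriv h. Qed.

Lemma eqm_subr0 N P Q : eqm N P Q -> eqm N (P - Q) 0.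
Proof. by move=> h k hk; rewrite coefB h // subrr coef0. Qed.

Lemma eqm0D N P Q : eqm N P 0 -> eqm N Q 0 -> eqm N (P + Q) 0.
Proof. by move=> h1 h2; have := eqmD h1 h2; rewrite addr0. Qed.

Lemma eqm0M N P Q : eqm N P 0 -> eqm N (P * Q) 0.
Proof. by move=> h; have := eqmM h (@eqm_refl N Q); rewrite mul0r. Qed.

End TruncatedEquality.

(* The Hasse-Taylor expansion of f, with 'X standing for the local parameter t,
   truncated at t^10: enough for the Wronskian of Sigma_3 (M = 9). *)
Definition taylor (L : fieldType) (D : nat -> L -> L) (f : L) : {poly L} :=
  \poly_(i < 10) D i f.

Section HasseTaylor.
Variables (L : fieldType) (D : nat -> L -> L).
Hypothesis D0 : forall f, D 0%N f = f.
Hypothesis DD : forall r f g, D r (f + g) = D r f + D r g.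
Hypothesis DM : forall r f g, D r (f * g) = \sum_(i < r.+1) D i f * D (r - i)%N g.
Hypothesis D1 : forall r, (0 < r)%N -> D r 1 = 0.

Lemma coef_taylor f k : (k < 10)%N -> (taylor D f)`_k = D k f.
Proof. by move=> hk; rewrite coef_poly hk. Qed.

Lemma taylor_coef0 f : (taylor D f)`_0 = f.
Proof. by rewrite coef_taylor. Qed.

Lemma taylorD f g : taylor D (f + g) = taylor D f + taylor D g.
Proof.
by apply/polyP => k; rewrite coefD !coef_poly; case: ltnP; rewrite ?DD ?addr0.
Qed.

Lemma taylor1 : eqm 10 (taylor D 1) 1.
Proof.
by move=> k hk; rewrite coef_taylor // coef1; case: k hk => [|k] _; rewrite ?D0 ?D1.
Qed.

Lemma taylorM f g : eqm 10 (taylor D (f * g)) (taylor D f * taylor D g).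
Proof.
move=> k hk; rewrite coef_taylor // DM coefM; apply: eq_bigr => -[i /= hi] _.
by rewrite !coef_taylor //; apply: leq_ltn_trans hk; rewrite ?leq_subr.
Qed.

Lemma taylorX f m : eqm 10 (taylor D (f ^+ m)) (taylor D f ^+ m).
Proof.
elim: m => [|m IH]; first exact: taylor1.
by rewrite !exprS; apply: eqm_trans (taylorM _ _) _; apply: eqmM.
Qed.

End HasseTaylor.

Definition mon_comb (R : comNzRingType) s (c : nat -> R) (X Y : {poly R}) :=
  \sum_(0 <= k < (Mdim s).+1) (c k)%:P *
     (X ^+ (nth (0%N, 0%N) (mons s) k).1 * Y ^+ (nth (0%N, 0%N) (mons s) k).2).

Lemma mon_comb1 (R : comNzRingType) (c : nat -> R) X Y :
  mon_comb 1 c X Y = (c 0%N)%:P + (c 1%N)%:P * Y + (c 2%N)%:P * X.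
Proof. by rewrite /mon_comb /index_iota /= !big_cons big_nil /=; ring. Qed.

Lemma mon_comb2 (R : comNzRingType) (c : nat -> R) X Y : mon_comb 2 c X Y =
  (c 0%N)%:P + (c 1%N)%:P * Y + (c 2%N)%:P * Y ^+ 2 + (c 3%N)%:P * X
  + (c 4%N)%:P * (X * Y) + (c 5%N)%:P * X ^+ 2.
Proof. by rewrite /mon_comb /index_iota /= !big_cons big_nil /=; ring. Qed.

Lemma mon_comb3 (R : comNzRingType) (c : nat -> R) X Y : mon_comb 3 c X Y =
  (c 0%N)%:P + (c 1%N)%:P * Y + (c 2%N)%:P * Y ^+ 2 + (c 3%N)%:P * Y ^+ 3
  + (c 4%N)%:P * X + (c 5%N)%:P * (X * Y) + (c 6%N)%:P * (X * Y ^+ 2)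
  + (c 7%N)%:P * X ^+ 2 + (c 8%N)%:P * (X ^+ 2 * Y) + (c 9%N)%:P * X ^+ 3.
Proof. by rewrite /mon_comb /index_iota /= !big_cons big_nil /=; ring. Qed.

Definition wronskian (L : fieldType) (D : nat -> L -> L) (x y : L) s :=
  wmat D x y (fun k : 'I_(Mdim s).+1 => nat_of_ord k).

Lemma increasing_seq_ge m (e : 'I_m -> nat) (i : 'I_m) : increasing_seq e -> (i <= e i)%N.
Proof.
move=> he; case: i => k; elim: k => [//|k IH] hk.
exact: leq_ltn_trans (IH (ltnW hk)) (he (Ordinal (ltnW hk)) (Ordinal hk) (ltnSn k)).
Qed.

Lemma classicalP (L : fieldType) (D : nat -> L -> L) x y s :
  classical D x y s <-> \det (wronskian D x y s) != 0.
Proof.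
split=> [[]//|hd]; split=> // e he _.
case: (pickP (fun i : 'I_(Mdim s).+1 => e i != i)) => [i0 hi0|he_id]; last first.
  by left=> i; have /negbFE/eqP := he_id i.
right; have [i hi hmin] := @arg_minnP _ i0 (fun i => e i != i) (fun i => nat_of_ord i) hi0.
exists i; split; first by rewrite ltn_neqAle eq_sym hi increasing_seq_ge.
move=> j hj; apply/eqP; apply: contraTT hj => hne.
by rewrite -leqNgt hmin // eq_sym.
Qed.

Definition Xt (R : comNzRingType) (x : R) : {poly R} := 'X + x%:P.

Section WronskianKernel.
Variables (L : fieldType) (D : nat -> L -> L) (x y : L).
Hypothesis D0 : forall f, D 0%N f = f.
Hypothesis DM : forall r f g, D r (f * g) = \sum_(i < r.+1) D i f * D (r - i)%N g.
Hypothesis D1 : forall r, (0 < r)%N -> D r 1 = 0.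
Hypothesis Dx : forall r, (0 < r)%N -> D r x = (r == 1%N)%:R.

Lemma taylor_x : eqm 10 (taylor D x) (Xt x).
Proof.
move=> k hk; rewrite coef_taylor // coefD coefX coefC.
by case: k hk => [|[|k]] hk; rewrite ?D0 ?Dx ?add0r ?addr0.
Qed.

Lemma taylor_mon i j :
  eqm 10 (taylor D (x ^+ i * y ^+ j)) (Xt x ^+ i * taylor D y ^+ j).
Proof.
apply: eqm_trans (taylorM DM _ _) _; apply: eqmM; last exact: taylorX.
by apply: eqm_trans (taylorX D0 DM D1 _ _) _; apply: eqmX; apply: taylor_x.
Qed.

Lemma wronskian_comb s (c : nat -> L) (k : 'I_(Mdim s).+1) : (Mdim s < 10)%N ->
  \sum_(j < (Mdim s).+1) c j * wronskian D x y s k j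
  = (mon_comb s c (Xt x) (taylor D y))`_k.
Proof.
move=> hs; rewrite /mon_comb big_mkord coef_sum; apply: eq_bigr => j _.
by rewrite coefCM mxE -taylor_mon ?coef_taylor // (leq_trans (ltn_ord k)).
Qed.

Lemma wronskian_det0P s : (Mdim s < 10)%N ->
  \det (wronskian D x y s) = 0 <->
  exists2 c : nat -> L, (exists2 j, (j < (Mdim s).+1)%N & c j != 0)
                      & eqm (Mdim s).+1 (mon_comb s c (Xt x) (taylor D y)) 0.
Proof.
move=> hs; split=> [hd | [c [j hj hcj] hc0]].
  have /det0P [v v0 hv] : \det (wronskian D x y s)^T == 0 by rewrite det_tr hd.
  exists (fun j => v 0 (inord j)).
    have [j vj0] : exists j, v 0 j != 0.
      apply/existsP; apply: contraR v0 => /existsPn vj0.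
      by apply/eqP/rowP => j; rewrite mxE; apply/eqP/negbNE/vj0.
    by exists j => //; rewrite inord_val.
  move=> k hk; rewrite coef0 -(wronskian_comb _ (Ordinal hk) hs).
  apply: etrans (_ : _ = (v *m (wronskian D x y s)^T) 0 (Ordinal hk)) _.
    by rewrite mxE; apply: eq_bigr => j _; rewrite inord_val [_ ^T _ _]mxE.
  by rewrite hv mxE.
apply/eqP; rewrite -det_tr; apply/det0P; exists (\row_j c j).
  by apply: contra hcj => /eqP/rowP/(_ (Ordinal hj)); rewrite !mxE => ->.
apply/rowP => k; rewrite [RHS]mxE -(coef0 _ k) -(hc0 k (ltn_ord k)).
by rewrite -wronskian_comb // mxE; apply: eq_bigr => i _; rewrite !mxE.
Qed.
End WronskianKernel.

Definition xdiff (R : comNzRingType) (x : R) (c : nat -> R) (j : nat) :=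
  j%:R * c j + x * j.+1%:R * c j.+1.

Definition ode_coef (R : comNzRingType) (x : R) (pc yc : nat -> R) (k : nat) :=
  \sum_(i < k.+1) pc i * yc (k - i)%N + xdiff x yc k
  - \sum_(i < k.+1) pc i * xdiff x yc (k - i)%N.

Section CoefficientFormulas.
Variables (R : comNzRingType) (x : R).

Lemma derivXt : (Xt x)^`() = 1.
Proof. by rewrite /Xt derivD derivX derivC addr0. Qed.

Lemma mul_deriv_Cexp (Z : {poly R}) c n : (0 < n)%N ->
  Z * (c%:P * Z ^+ n)^`() = c%:P * Z ^+ n * Z^`() *+ n.
Proof.
by case: n => // n _; rewrite derivM derivC mul0r add0r deriv_exp exprS; ring.
Qed.

Lemma coefXtM (Q : {poly R}) k :
  (Xt x * Q)`_k = (if k is k'.+1 then Q`_k' else 0) + x * Q`_k.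
Proof. by rewrite /Xt mulrDl coefD coefXM coefCM; case: k. Qed.

Lemma coefXt_deriv (Q : {poly R}) k : (Xt x * Q^`())`_k = xdiff x (fun i => Q`_i) k.
Proof.
by rewrite coefXtM /xdiff; case: k => [|k]; rewrite !coef_deriv -!(mulr_natl (Q`_ _)); ring.
Qed.

Lemma coef_ode (P Y : {poly R}) k :
  (P * Y + (1 - P) * (Xt x * Y^`()))`_k
  = ode_coef x (fun i => P`_i) (fun i => Y`_i) k.
Proof.
rewrite coefD mulrBl mul1r coefB coefXt_deriv !coefM /ode_coef addrA; congr (_ - _).
by apply: eq_bigr => i _; rewrite coefXt_deriv.
Qed.

Lemma coef_line_high (c : nat -> R) (Y : {poly R}) k :
  (mon_comb 1 c (Xt x) Y)`_k.+2 = c 1%N * Y`_k.+2.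
Proof. by rewrite mon_comb1 !coefD coefC !coefCM /Xt coefD coefX coefC /=; ring. Qed.

Lemma coef_conic_high (c : nat -> R) (Y : {poly R}) k :
  (mon_comb 2 c (Xt x) Y)`_k.+3
  = (c 1%N + x * c 4%N) * Y`_k.+3 + c 2%N * (Y ^+ 2)`_k.+3 + c 4%N * Y`_k.+2.
Proof.
rewrite mon_comb2 !coefD coefC !coefCM [Xt x ^+ 2]expr2 !coefXtM.
by rewrite /Xt !coefD !coefX !coefC /=; ring.
Qed.

Lemma line_x_eq0 (c : nat -> R) (Y : {poly R}) :
  c 1%N = 0 -> eqm 2 (mon_comb 1 c (Xt x) Y) 0 -> c 0%N = 0 /\ c 2%N = 0.
Proof.
rewrite mon_comb1 => -> h; have := h 1%N isT; have := h 0%N isT.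
rewrite !coefD !coefCM coefC /Xt !coefD !coefX !coefC ?coef0 /= => e0 e1.
have c2 : c 2%N = 0 by rewrite -e1; ring.
by split=> //; rewrite -e0 c2; ring.
Qed.

Lemma conic_x_eq0 (c : nat -> R) (Y : {poly R}) :
  c 1%N = 0 -> c 2%N = 0 -> c 4%N = 0 -> eqm 3 (mon_comb 2 c (Xt x) Y) 0 ->
  [/\ c 0%N = 0, c 3%N = 0 & c 5%N = 0].
Proof.
rewrite mon_comb2 => -> -> -> h.
have := h 2%N isT; have := h 1%N isT; have := h 0%N isT.
rewrite !coefD !coefCM coefC [Xt x ^+ 2]expr2 !coefXtM /Xt !coefD !coefX !coefC ?coef0 /=.
move=> e0 e1 e2; have c5 : c 5%N = 0 by rewrite -e2; ring.
have c3 : c 3%N = 0 by rewrite -e1 c5; ring.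
by split=> //; rewrite -e0 c3 c5; ring.
Qed.
End CoefficientFormulas.

Definition det3 (R : pzRingType) (a11 a12 a13 a21 a22 a23 a31 a32 a33 : R) : R :=
  a11 * (a22 * a33 - a23 * a32) - a12 * (a21 * a33 - a23 * a31)
  + a13 * (a21 * a32 - a22 * a31).

Lemma det3_kernel0 (R : idomainType) (a11 a12 a13 a21 a22 a23 a31 a32 a33 v1 v2 v3 : R) :
  a11 * v1 + a12 * v2 + a13 * v3 = 0 ->
  a21 * v1 + a22 * v2 + a23 * v3 = 0 ->
  a31 * v1 + a32 * v2 + a33 * v3 = 0 ->
  det3 a11 a12 a13 a21 a22 a23 a31 a32 a33 != 0 -> [/\ v1 = 0, v2 = 0 & v3 = 0].
Proof.
set d := det3 _ _ _ _ _ _ _ _ _ => e1 e2 e3 d0.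
have cramer (v : R) : d * v = 0 -> v = 0 by move/eqP; rewrite mulf_eq0 (negbTE d0) => /eqP.
split; apply: cramer.
- have -> : d * v1 = (a22 * a33 - a23 * a32) * (a11 * v1 + a12 * v2 + a13 * v3)
    - (a12 * a33 - a13 * a32) * (a21 * v1 + a22 * v2 + a23 * v3)
    + (a12 * a23 - a13 * a22) * (a31 * v1 + a32 * v2 + a33 * v3) by rewrite /d /det3; ring.
  by rewrite e1 e2 e3; ring.
- have -> : d * v2 = - (a21 * a33 - a23 * a31) * (a11 * v1 + a12 * v2 + a13 * v3)
    + (a11 * a33 - a13 * a31) * (a21 * v1 + a22 * v2 + a23 * v3)
    - (a11 * a23 - a13 * a21) * (a31 * v1 + a32 * v2 + a33 * v3) by rewrite /d /det3; ring.
  by rewrite e1 e2 e3; ring.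
- have -> : d * v3 = (a21 * a32 - a22 * a31) * (a11 * v1 + a12 * v2 + a13 * v3)
    - (a11 * a32 - a12 * a31) * (a21 * v1 + a22 * v2 + a23 * v3)
    + (a11 * a22 - a12 * a21) * (a31 * v1 + a32 * v2 + a33 * v3) by rewrite /d /det3; ring.
  by rewrite e1 e2 e3; ring.
Qed.

Section FermatSeries.
Variable L : fieldType.
Hypothesis L8640 : 8640%:R != 0 :> L. (* i.e. char L is not 2, 3 or 5 *)

Lemma natr_dvd8640_neq0 d : (d %| 8640)%N -> d%:R != 0 :> L.
Proof.
case/dvdnP=> e he; apply: contraNneq L8640 => hd.
by rewrite he natrM hd mulr0.
Qed.

(* [tcoef nu z k] is the coefficient of s^k in (1 - z ((1 + s)^nu - 1))^(1/nu). *)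
Definition tcoef (nu z : L) (k : nat) : L :=
  match k with
  | 0 => 1
  | 1 => - z
  | 2 => z * (1 + z) * (1 - nu) / 2
  | 3 => z * (1 + z) * (- (2 + z) + 3 * nu * (1 + z) - nu ^+ 2 * (1 + 2 * z)) / 6
  | 4 => z * (1 + z) * ((2 + z) * (3 + z) - nu * (6 * z ^+ 2 + 18 * z + 11)
           + nu ^+ 2 * (11 * z ^+ 2 + 19 * z + 6) - nu ^+ 3 * (6 * z ^+ 2 + 6 * z + 1)) / 24
  | 5 => z * (1 + z) * (- ((2 + z) * (3 + z) * (4 + z))
           + 5 * nu * (2 * z ^+ 3 + 12 * z ^+ 2 + 21 * z + 10)
           - 5 * nu ^+ 2 * (7 * z ^+ 3 + 27 * z ^+ 2 + 28 * z + 7)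
           + 5 * nu ^+ 3 * (10 * z ^+ 3 + 24 * z ^+ 2 + 15 * z + 2)
           - nu ^+ 4 * (24 * z ^+ 3 + 36 * z ^+ 2 + 14 * z + 1)) / 120
  | _ => 0
  end.

Ltac field_nz := field; repeat (apply/andP; split);
  try (assumption || (apply: natr_dvd8640_neq0; done)).

Lemma fermat_series_coefs (x u nu : L) (pc yc : nat -> L) :
  x != 0 -> 1 - u != 0 -> pc 0%N = u ->
  (forall k, (k < 4)%N -> xdiff x pc k = nu * pc k) ->
  (forall k, (k < 5)%N -> ode_coef x pc yc k = 0) ->
  forall k, (k <= 5)%N -> yc k = yc 0%N * tcoef nu (u / (1 - u)) k / x ^+ k.
Proof.
move=> x0 u1 pc0 hP hode.
have pS k : (k < 4)%N -> pc k.+1 = (nu - k%:R) * pc k / (x * k.+1%:R).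
  move=> hk; have xk : x * k.+1%:R != 0.
    by rewrite mulf_neq0 // natr_dvd8640_neq0 //; case: k hk => [|[|[|[]]]].
  by apply: (canRL (mulfK xk)); rewrite mulrBl -(hP k hk) /xdiff; ring.
have solve k r : (k < 5)%N ->
    x * k.+1%:R * (1 - u) * (yc k.+1 - r) = ode_coef x pc yc k -> yc k.+1 = r.
  move=> hk; rewrite hode // => /eqP; rewrite !mulf_eq0 (negbTE x0) (negbTE u1).
  rewrite (negbTE (natr_dvd8640_neq0 _)) /= ?subr_eq0 => [/eqP //|].
  by case: k hk => [|[|[|[|[]]]]].
set z := u / (1 - u).
have y1 : yc 1%N = yc 0%N * tcoef nu z 1 / x ^+ 1.
  apply: solve => //; rewrite /ode_coef /xdiff !big_ord_recr !big_ord0 /=.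
  by rewrite ?subSS ?subn0 ?pS // pc0 /z /tcoef /=; field_nz.
have y2 : yc 2%N = yc 0%N * tcoef nu z 2 / x ^+ 2.
  apply: solve => //; rewrite /ode_coef /xdiff !big_ord_recr !big_ord0 /=.
  by rewrite ?subSS ?subn0 ?pS // pc0 y1 /z /tcoef /=; field_nz.
have y3 : yc 3%N = yc 0%N * tcoef nu z 3 / x ^+ 3.
  apply: solve => //; rewrite /ode_coef /xdiff !big_ord_recr !big_ord0 /=.
  by rewrite ?subSS ?subn0 ?pS // pc0 y1 y2 /z /tcoef /=; field_nz.
have y4 : yc 4%N = yc 0%N * tcoef nu z 4 / x ^+ 4.
  apply: solve => //; rewrite /ode_coef /xdiff !big_ord_recr !big_ord0 /=.
  by rewrite ?subSS ?subn0 ?pS // pc0 y1 y2 y3 /z /tcoef /=; field_nz.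
have y5 : yc 5%N = yc 0%N * tcoef nu z 5 / x ^+ 5.
  apply: solve => //; rewrite /ode_coef /xdiff !big_ord_recr !big_ord0 /=.
  by rewrite ?subSS ?subn0 ?pS // pc0 y1 y2 y3 y4 /z /tcoef /=; field_nz.
by case=> [|[|[|[|[|[|]]]]]] // _; rewrite expr0 mulr1 divr1.
Qed.

Lemma det3_fermat_series (x u nu : L) (yc : nat -> L) :
  x != 0 -> 1 - u != 0 ->
  (forall k, (k <= 5)%N -> yc k = yc 0%N * tcoef nu (u / (1 - u)) k / x ^+ k) ->
  let z := u / (1 - u) in
  let sq k := \sum_(i < k.+1) yc i * yc (k - i)%N in
  det3 (yc 3%N) (sq 3%N) (yc 2%N) (yc 4%N) (sq 4%N) (yc 3%N) (yc 5%N) (sq 5%N) (yc 4%N)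
  = yc 0%N ^+ 4 / x ^+ 11 / 8640 * ((nu - 1) ^+ 4 * (2 * nu - 1) * (nu - 2) * (nu + 1))
    * (z ^+ 4 * (1 + z) ^+ 4 * (z - 1) * (2 * z + 1) * (z + 2)).
Proof.
move=> x0 u1 hy z sq; rewrite /sq !big_ord_recr !big_ord0 /= ?subSS ?subn0.
rewrite (hy 1%N) // (hy 2%N) // (hy 3%N) // (hy 4%N) // (hy 5%N) // /z /tcoef /det3.
field_nz.
Qed.
End FermatSeries.

Lemma exprD_pchar (R : comNzRingType) p (u v : R) :
  p \in [pchar R] -> (u + v) ^+ p = u ^+ p + v ^+ p.
Proof. by move=> hp; rewrite -!(pFrobenius_autE hp) pFrobenius_autD_comm //; apply: mulrC. Qed.

Lemma exprN1_pchar (R : comNzRingType) p : p \in [pchar R] -> (- 1) ^+ p = - 1 :> R.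
Proof. by move=> hp; rewrite -(pFrobenius_autE hp) pFrobenius_autN pFrobenius_aut1. Qed.

Lemma eqm_exp_pchar (R : comNzRingType) p (Q : {poly R}) :
  p \in [pchar R] -> eqm p (Q ^+ p) (Q`_0 ^+ p)%:P.
Proof.
move=> pcharRp; have pcharP : p \in [pchar {poly R}] by rewrite pchar_poly.
have dQ : Q = (Q`_0)%:P + 'X * drop_poly 1 Q.
  apply/polyP => k; rewrite coefD coefC coefXM coef_drop_poly.
  by case: k => [|k]; rewrite ?add0r ?addr0 ?addn1.
move=> k hk; rewrite {1}dQ exprD_pchar // exprMn -rmorphXn coefD coefXnM hk.
by rewrite addr0.
Qed.

Lemma pchar_Fbar p : prime p -> p \in [pchar (Fbar p)].
Proof.
move=> pp; apply: (rmorph_pchar (projT1 (projT2 (countable_algebraic_closure 'F_p)))).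
exact: pchar_Fp.
Qed.

Lemma closed_field_exp_surj (K : closedFieldType) m (a : K) : (0 < m)%N ->
  exists r : K, r ^+ m = a.
Proof.
move=> m0; have /closed_rootP [r] : size ('X^m - a%:P) != 1%N.
  by rewrite size_XnsubC // gtn_eqF.
by rewrite rootE !hornerE subr_eq0 => /eqP; exists r.
Qed.

(* If p | n then a X^n + b Y^n - 1 is the p-th power of a polynomial. *)
Lemma fermat_poly_irr_pchar_ndvd p n (a b : Fbar p) : prime p -> (0 < n)%N ->
  irreducible_elt (fermat_poly a b n) -> ~~ (p %| n)%N.
Proof.
move=> pp n0 [F0 [Fnu Firr]]; apply/negP => /dvdnP [m nE].
have pcharP : p \in [pchar {poly {poly Fbar p}}] by rewrite !pchar_poly pchar_Fbar.
have [al aE] := closed_field_exp_surj a (prime_gt0 pp).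
have [be bE] := closed_field_exp_surj b (prime_gt0 pp).
subst a b.
pose G : {poly {poly Fbar p}} := (al%:P * 'X^m)%:P + (be%:P)%:P * 'X^m - 1.
have FG : fermat_poly (al ^+ p) (be ^+ p) n = G * G ^+ p.-1.
  rewrite -exprS prednK ?prime_gt0 // /G /fermat_poly.
  rewrite !exprD_pchar // exprN1_pchar // -!rmorphXn /= !exprMn -!rmorphXn /=.
  by rewrite -!exprM -nE.
have Gp1 : (0 < p.-1)%N by rewrite -subn1 subn_gt0 prime_gt1.
have Gu : G \is a GRing.unit by case: (Firr _ _ FG); rewrite ?unitrX_pos.
by move: Fnu; rewrite FG unitrMr ?unitrX.
Qed.

Section Residues.
Variables (R : idomainType) (p : nat).
Hypothesis pcharRp : p \in [pchar R].

Lemma natr_inj_lt_pchar i j : (i < p)%N -> (j < p)%N -> i%:R = j%:R :> R -> i = j.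
Proof.
wlog ij : i j / (i <= j)%N.
  by move=> H ip jp e; case: (leqP i j) => [|/ltnW] h; [apply: H | apply/esym/H].
move=> ip jp e; have : (p %| j - i)%N by rewrite (dvdn_pcharf pcharRp) natrB // e subrr.
have : (j - i < p)%N by apply: leq_ltn_trans jp; apply: leq_subr.
by case: (posnP (j - i)) => [/eqP | /dvdn_leq h /[swap] /h]; lia.
Qed.

Lemma special_residue n : (2 < p)%N -> ~~ (p %| n)%N ->
  (n%:R - 1) ^+ 4 * (2 * n%:R - 1) * (n%:R - 2) * (n%:R + 1) = 0 :> R ->
  [\/ n %% p = 1, n %% p = 2, (n %% p).+1 = p | 2 * (n %% p) = p.+1]%N.
Proof.
move=> p2 pn; rewrite -(GRing.natr_mod_pchar pcharRp); set r := (n %% p)%N.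
have rp : (r < p)%N by rewrite ltn_mod prime_gt0 // (pcharf_prime pcharRp).
have r0 : (0 < r)%N by rewrite lt0n -/(dvdn p n) pn.
have multiple_of_p k : (k%:R : R) = 0 -> (0 < k < 2 * p)%N -> k = p.
  move/eqP; rewrite -(dvdn_pcharf pcharRp) => /dvdnP [q ->].
  by case: q => [|[|q]]; rewrite ?mul0n ?mul1n // !mulSn; lia.
move/eqP; rewrite 3!mulf_eq0 expf_eq0 /= !subr_eq0 => /orP[/orP[/orP[]|]|] /eqP e.
- by apply: Or41; apply: natr_inj_lt_pchar => //; lia.
- apply: Or44; suff : (2 * r - 1 = p)%N by lia.
  apply: multiple_of_p; last by lia.
  by rewrite natrB ?natrM ?e ?subrr //; lia.
- by apply: Or42; apply: natr_inj_lt_pchar.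
- apply: Or43; apply: multiple_of_p; last by lia.
  by rewrite -natr1.
Qed.
End Residues.

Section FermatCurve.
Variables (p n : nat) (K L : fieldType) (iota : {rmorphism K -> L}) (a b : K).
Variables (x y : L) (D : nat -> L -> L).
Hypothesis pcharLp : p \in [pchar L].
Hypothesis p_gt10 : (10 < p)%N.
Hypothesis n_gt0 : (0 < n)%N.
Hypothesis p_ndvd_n : ~~ (p %| n)%N.
Hypothesis curve : iota a * x ^+ n + iota b * y ^+ n = 1.
Hypothesis hasseD : hasse_wrt iota x D.

Let D0 : forall f, D 0%N f = f. Proof. by case: hasseD. Qed.
Let DD : forall r f g, D r (f + g) = D r f + D r g. Proof. by case: hasseD. Qed.
Let DM : forall r f g, D r (f * g) = \sum_(i < r.+1) D i f * D (r - i)%N g.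
Proof. by case: hasseD. Qed.
Let DC : forall r c, (0 < r)%N -> D r (iota c) = 0. Proof. by case: hasseD. Qed.
Let Dx : forall r, (0 < r)%N -> D r x = (r == 1%N)%:R. Proof. by case: hasseD. Qed.
Let D1 : forall r, (0 < r)%N -> D r 1 = 0.
Proof. by move=> r r0; rewrite -(rmorph1 iota) DC. Qed.

Local Notation X := (Xt x).
Local Notation Y := (taylor D y).
Local Notation u := (iota a * x ^+ n).

Lemma natr_lt_pchar_neq0 k : (0 < k < p)%N -> k%:R != 0 :> L.
Proof. by case/andP=> k0 kp; rewrite -(dvdn_pcharf pcharLp) gtnNdvd. Qed.

Lemma natr8640_neq0 : 8640%:R != 0 :> L.
Proof.
have -> : 8640%:R = 2 ^+ 6 * 3 ^+ 3 * 5 :> L by rewrite -!natrX -!natrM.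
by rewrite !mulf_neq0 ?expf_neq0 ?natr_lt_pchar_neq0 //; lia.
Qed.

Lemma natr_n_neq0 : n%:R != 0 :> L.
Proof. by rewrite -(dvdn_pcharf pcharLp). Qed.

Lemma x_neq0 : x != 0.
Proof.
apply/eqP => x0; have := Dx (ltnSn 0); rewrite x0 /=.
have -> : D 1 0 = 0 by apply: (@addrI _ (D 1 0)); rewrite -DD !addr0.
by move/eqP; rewrite eq_sym oner_eq0.
Qed.

Lemma taylorC c : eqm 10 (taylor D (iota c)) (iota c)%:P.
Proof.
by move=> k kp; rewrite coef_taylor // coefC; case: k kp => [|k] _; rewrite ?D0 ?DC.
Qed.

Lemma taylorCM c f : eqm 10 (taylor D (iota c * f)) ((iota c)%:P * taylor D f).
Proof. by apply: eqm_trans (taylorM DM _ _) _; apply: eqmM; first exact: taylorC. Qed.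

Lemma taylor_xn m : eqm 10 (taylor D (x ^+ m)) (X ^+ m).
Proof. by apply: eqm_trans (taylorX D0 DM D1 _ _) _; apply: eqmX; apply: taylor_x. Qed.

Lemma taylor_curve : eqm 10 ((iota a)%:P * X ^+ n + (iota b)%:P * Y ^+ n) 1.
Proof.
apply: eqm_trans (eqm_sym _) (taylor1 D0 D1); rewrite -curve taylorD //.
apply: eqmD; (apply: eqm_trans (taylorCM _ _) _; apply: eqmM => //).
  exact: taylor_xn.
exact: taylorX.
Qed.

Lemma coefXt_exp0 m : (X ^+ m)`_0 = x ^+ m.
Proof. by rewrite -horner_coef0 horner_exp /Xt !hornerE. Qed.

(* Differentiating P + Q = 1 with P = a X^n, Q = b Y^n and multiplying by X Y gives
   n (P Y + Q X Y') = 0 by Euler's identity; then substitute Q = 1 - P. *)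
Lemma fermat_ode :
  eqm 9 ((iota a)%:P * X ^+ n * Y + (1 - (iota a)%:P * X ^+ n) * (X * Y^`())) 0.
Proof.
set P := (iota a)%:P * X ^+ n; set Q := (iota b)%:P * Y ^+ n.
have dPQ : eqm 9 (P^`() + Q^`()) 0.
  by have := eqm_deriv taylor_curve; rewrite derivD -polyC1 derivC.
have euler : (X * Y) * (P^`() + Q^`()) = (P * Y + Q * (X * Y^`())) *+ n.
  have -> : (X * Y) * (P^`() + Q^`()) = Y * (X * P^`()) + X * (Y * Q^`()) by ring.
  by rewrite !mul_deriv_Cexp // derivXt /P /Q; ring.
have h : eqm 9 ((P * Y + Q * (X * Y^`())) *+ n) 0.
  by rewrite -euler mulrC; apply: eqm0M.
have {}h : eqm 9 (P * Y + Q * (X * Y^`())) 0.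
  move=> k k9; have /eqP := h k k9; rewrite coefMn coef0 -mulr_natr mulf_eq0.
  by rewrite (negbTE natr_n_neq0) orbF => /eqP.
apply: eqm_trans h; apply: eqmD => //; apply: eqmM => // k k9.
by rewrite coefB -(taylor_curve (ltnW k9)) coefD addrC addKr.
Qed.

Lemma xn_not_const : a != 0 -> forall c, u != iota c.
Proof.
move=> a0 c; apply/eqP => uc.
have := taylorCM a (x ^+ n) (isT : 1 < 10)%N; rewrite uc coef_taylor // DC //.
rewrite coefCM (taylor_xn n (isT : 1 < 10)%N) -[1%N]/(0.+1) -[_`_1]mulr1n -coef_deriv.
rewrite deriv_exp derivXt mul1r coefMn coefXt_exp0 => /esym/eqP.
rewrite -mulr_natl !mulf_eq0 fmorph_eq0 expf_eq0 (negbTE a0) (negbTE natr_n_neq0).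
by rewrite (negbTE x_neq0) andbF.
Qed.

Lemma subr1_xn_neq0 : a != 0 -> 1 - u != 0.
Proof. by move=> a0; rewrite subr_eq0 eq_sym -(rmorph1 iota) xn_not_const. Qed.

Lemma y_neq0 : a != 0 -> y != 0.
Proof.
move=> a0; apply: contra_neq (xn_not_const a0 1) => y0.
by move: curve; rewrite y0 expr0n gtn_eqF // mulr0 addr0 rmorph1.
Qed.

Lemma taylor_y_coefs : a != 0 -> forall k, (k <= 5)%N ->
  Y`_k = Y`_0 * tcoef n%:R (u / (1 - u)) k / x ^+ k.
Proof.
move=> a0; set P := (iota a)%:P * X ^+ n.
have u1 := subr1_xn_neq0 a0.
apply: (@fermat_series_coefs _ natr8640_neq0 _ _ _ (fun i => P`_i)) => //.
- exact: x_neq0.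
- by rewrite coefCM coefXt_exp0.
- by move=> k _; rewrite -coefXt_deriv mul_deriv_Cexp // derivXt mulr1 coefMn mulr_natl.
- by move=> k k5; rewrite -coef_ode fermat_ode ?coef0 //; apply: leq_trans k5 _.
Qed.

Lemma fermat_z_neq0 : a != 0 -> let z := u / (1 - u) in
  [/\ z != 0, 1 + z != 0, z - 1 != 0, 2 * z + 1 != 0 & z + 2 != 0].
Proof.
move=> a0 z; have u1 := subr1_xn_neq0 a0.
have L2 : 2 != 0 :> L by rewrite natr_lt_pchar_neq0 //; lia.
have frac (k : L) c e : k != 0 -> e = k * (u - iota c) / (1 - u) -> e != 0.
  by move=> k0 ->; rewrite !mulf_neq0 ?invr_eq0 // subr_eq0 xn_not_const.
split.
- by apply: (frac 1 0); rewrite ?oner_neq0 // rmorph0 subr0 mul1r.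
- by rewrite (_ : 1 + z = (1 - u)^-1) ?invr_eq0 // /z; field.
- by apply: (frac 2 2^-1) => //; rewrite fmorphV rmorph_nat /z; field; rewrite u1 L2.
- by apply: (frac 1 (-1)); rewrite ?oner_neq0 // rmorphN1 /z; field.
- by apply: (frac (-1) 2); rewrite ?oppr_eq0 ?oner_neq0 // rmorph_nat /z; field.
Qed.

Lemma nonclassical1_n1 : a != 0 -> \det (wronskian D x y 1) = 0 -> n%:R = 1 :> L.
Proof.
move=> a0 /(@wronskian_det0P _ _ _ y D0 DM D1 Dx 1 isT) [c [j j3 cj] hc].
have c1 : c 1%N != 0.
  apply: contra cj => /eqP c10; have [c0 c2] := line_x_eq0 c10 (eqm_le (isT : 2 <= 3)%N hc).
  by case: j j3 => [|[|[|]]] // _; rewrite ?c0 ?c10 ?c2.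
have := hc 2%N isT; rewrite coef_line_high coef0 => /eqP.
rewrite mulf_eq0 (negbTE c1) taylor_y_coefs // taylor_coef0 //= => Y2.
apply/eqP; apply: contraTT Y2 => n1.
have [_ z1 _ _ _] := fermat_z_neq0 a0.
have L2 : 2 != 0 :> L by rewrite natr_lt_pchar_neq0 //; lia.
rewrite !mulf_neq0 ?invr_eq0 ?expf_neq0 ?fmorph_eq0 ?subr1_xn_neq0 ?y_neq0 ?x_neq0 //.
by rewrite subr_eq0 eq_sym.
Qed.

Lemma nonclassical2_residue : a != 0 -> \det (wronskian D x y 2) = 0 ->
  (n%:R - 1) ^+ 4 * (2 * n%:R - 1) * (n%:R - 2) * (n%:R + 1) = 0 :> L.
Proof.
move=> a0 /(@wronskian_det0P _ _ _ y D0 DM D1 Dx 2 isT) [c [j j6 cj] hc].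
pose sq k := \sum_(i < k.+1) Y`_i * Y`_(k - i).
have row k : (k < 3)%N ->
    Y`_k.+3 * (c 1%N + x * c 4%N) + sq k.+3 * c 2%N + Y`_k.+2 * c 4%N = 0.
  move=> k3; have := hc k.+3 (k3 : (k.+3 < 6)%N).
  by rewrite coef_conic_high expr2 coefM coef0 => e; rewrite -[RHS]e /sq; ring.
have [d0 | d0] := eqVneq (det3 (Y`_3) (sq 3%N) (Y`_2) (Y`_4) (sq 4%N) (Y`_3)
                                (Y`_5) (sq 5%N) (Y`_4)) 0; last first.
  have [v1 c2 c4] := det3_kernel0 (row 0%N isT) (row 1%N isT) (row 2%N isT) d0.
  have c1 : c 1%N = 0 by rewrite -v1 c4 mulr0 addr0.
  have [c0 c3 c5] := conic_x_eq0 c1 c2 c4 (eqm_le (isT : 3 <= 6)%N hc).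
  by move: cj; case: j j6 => [|[|[|[|[|[|]]]]]] // _; rewrite ?c0 ?c1 ?c2 ?c3 ?c4 ?c5 eqxx.
have := det3_fermat_series natr8640_neq0 x_neq0 (subr1_xn_neq0 a0) (taylor_y_coefs a0).
rewrite /= -/(sq 3%N) -/(sq 4%N) -/(sq 5%N) d0 => /esym/eqP.
have [z0 z1 z2 z3 z4] := fermat_z_neq0 a0.
have K0 : Y`_0 ^+ 4 / x ^+ 11 / 8640 != 0.
  by rewrite !mulf_neq0 ?invr_eq0 ?expf_neq0 ?taylor_coef0 ?y_neq0 ?x_neq0 ?natr8640_neq0.
set z := u / (1 - u) in z0 z1 z2 z3 z4 *.
have Z0 : z ^+ 4 * (1 + z) ^+ 4 * (z - 1) * (2 * z + 1) * (z + 2) != 0.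
  by do 4 apply: mulf_neq0 => //; rewrite expf_neq0.
by rewrite mulf_eq0 (negbTE Z0) orbF mulf_eq0 (negbTE K0) => /eqP.
Qed.

Lemma det_wronskian3_eq0 (c : seq L) G : (exists2 j, (j < 10)%N & c`_j != 0) ->
  mon_comb 3 (nth 0 c) X Y = G -> eqm 10 G 0 -> \det (wronskian D x y 3) = 0.
Proof.
by move=> cj <- G0; apply/(@wronskian_det0P _ _ _ y D0 DM D1 Dx 3 isT); exists (nth 0 c).
Qed.

(* For a = 0 the differential equation reads X Y' = 0, so y is a constant. *)
Lemma det_wronskian3_a0 : a = 0 -> \det (wronskian D x y 3) = 0.
Proof.
move=> a0; have ode := fermat_ode.
rewrite a0 rmorph0 !(mul0r, subr0, mul1r, add0r) in ode.
have dY k : (k < 9)%N -> (Y^`())`_k = 0.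
  elim: k => [|k IH] k9; have := ode _ k9; rewrite coefXtM /= ?IH ?(ltnW k9) //;
  by rewrite ?coef0 ?add0r => h; apply: (mulfI x_neq0); rewrite mulr0.
have Yk k : (0 < k < 10)%N -> Y`_k = 0.
  case: k => [//|k] /= k10; have /eqP := dY k k10; rewrite coef_deriv -mulr_natr.
  by rewrite mulf_eq0 (negbTE (natr_lt_pchar_neq0 _)) ?orbF => [/eqP|]; last lia.
apply: (det_wronskian3_eq0 (c := [:: Y`_0; -1]) (G := (Y`_0)%:P - Y)).
- by exists 1%N; rewrite //= oppr_eq0 oner_eq0.
- by rewrite mon_comb3 /= !polyC0 polyCN polyC1; ring.
move=> k k10; rewrite coefB coefC coef0; case: k k10 => [|k] k10 /=.
  by rewrite subrr.
by rewrite Yk ?subrr.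
Qed.

Local Notation r := (n %% p)%N.
Local Notation A := (iota a * (x ^+ p) ^+ (n %/ p)).
Local Notation B := (iota b * (y ^+ p) ^+ (n %/ p)).

Lemma Xt_exp_pchar : eqm 10 (X ^+ p) (x ^+ p)%:P.
Proof.
have := eqm_le (ltnW p_gt10) (eqm_exp_pchar X pcharLp).
by rewrite -[X`_0]/((X ^+ 1)`_0) coefXt_exp0.
Qed.

Lemma taylor_exp_pchar : eqm 10 (Y ^+ p) (y ^+ p)%:P.
Proof. by have := eqm_le (ltnW p_gt10) (eqm_exp_pchar Y pcharLp); rewrite taylor_coef0. Qed.

(* Since p-th powers are constant modulo t^p, only the residue of n modulo p matters. *)
Lemma taylor_curve_residue : eqm 10 (A%:P * X ^+ r + B%:P * Y ^+ r) 1.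
Proof.
apply: eqm_trans taylor_curve; have nE := divn_eq n p.
rewrite [in X ^+ n]nE [in Y ^+ n]nE !exprD !(mulnC _ p) !exprM.
rewrite !polyCM !rmorphXn -!mulrA; apply: eqmD; apply: eqmM => //; apply: eqmM => //.
  by apply: eqm_sym; apply: eqmX; rewrite -rmorphXn; apply: Xt_exp_pchar.
by apply: eqm_sym; apply: eqmX; rewrite -rmorphXn; apply: taylor_exp_pchar.
Qed.

Lemma det_wronskian3_line : r = 1%N -> \det (wronskian D x y 3) = 0.
Proof.
move=> r1; have := taylor_curve_residue; rewrite r1 !expr1 => /eqm_subr0 E.
apply: (det_wronskian3_eq0 (c := [:: -1; B; 0; 0; A]) _ _ E).
  by exists 0%N; rewrite //= oppr_eq0 oner_eq0.
by rewrite mon_comb3 /= !polyC0 polyCN polyC1; ring.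
Qed.

Lemma det_wronskian3_conic : r = 2%N -> \det (wronskian D x y 3) = 0.
Proof.
move=> r2; have := taylor_curve_residue; rewrite r2 => /eqm_subr0 E.
apply: (det_wronskian3_eq0 (c := [:: -1; 0; B; 0; 0; 0; 0; A]) _ _ E).
  by exists 0%N; rewrite //= oppr_eq0 oner_eq0.
by rewrite mon_comb3 /= !polyC0 polyCN polyC1; ring.
Qed.

(* With X^p = X X^r and Y^p = Y Y^r constant, X Y times the curve is a hyperbola. *)
Lemma det_wronskian3_hyperbola : r.+1 = p -> \det (wronskian D x y 3) = 0.
Proof.
move=> rp; have E := eqm_subr0 taylor_curve_residue.
have XpE : X ^+ p = X * X ^+ r by rewrite -exprS rp.
have YpE : Y ^+ p = Y * Y ^+ r by rewrite -exprS rp.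
have hyp (R : comNzRingType) (X' Y' a' b' xp yp Xr Yr : R) :
  (a' * xp) * Y' + (b' * yp) * X' - X' * Y' = (a' * Xr + b' * Yr - 1) * (X' * Y')
    + (xp - X' * Xr) * (a' * Y') + (yp - Y' * Yr) * (b' * X') by ring.
apply: (det_wronskian3_eq0 (c := [:: 0; A * x ^+ p; 0; 0; B * y ^+ p; -1])
                           (G := (A * x ^+ p)%:P * Y + (B * y ^+ p)%:P * X - X * Y)).
- by exists 5%N; rewrite //= oppr_eq0 oner_eq0.
- by rewrite mon_comb3 /= !polyC0 polyCN polyC1; ring.
rewrite (polyCM A) (polyCM B) (hyp _ _ _ _ _ _ _ (X ^+ r) (Y ^+ r)).
apply: eqm0D; [apply: eqm0D|]; apply: eqm0M => //.
  by rewrite -XpE; apply: eqm_subr0; apply: eqm_sym; apply: Xt_exp_pchar.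
by rewrite -YpE; apply: eqm_subr0; apply: eqm_sym; apply: taylor_exp_pchar.
Qed.

(* With 2 r = p + 1, the squares of V = A X^r and W = B Y^r are linear in X and Y,
   and eliminating them from V + W = 1 gives a parabola. *)
Lemma det_wronskian3_parabola : (2 * r)%N = p.+1 -> \det (wronskian D x y 3) = 0.
Proof.
move=> rp; have := taylor_curve_residue; move: A B => A B E.
set V := A%:P * X ^+ r; set W := B%:P * Y ^+ r.
have V2 : eqm 10 (V ^+ 2 - (A ^+ 2 * x ^+ p)%:P * X) 0.
  have -> : V ^+ 2 - (A ^+ 2 * x ^+ p)%:P * X = (X ^+ p - (x ^+ p)%:P) * (A%:P ^+ 2 * X).
    have X2 : (X ^+ r) ^+ 2 = X ^+ p * X by rewrite -exprM (mulnC r 2) rp exprSr.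
    by rewrite /V exprMn X2 polyCM rmorphXn; ring.
  by apply: eqm0M; apply: eqm_subr0; apply: Xt_exp_pchar.
have W2 : eqm 10 (W ^+ 2 - (B ^+ 2 * y ^+ p)%:P * Y) 0.
  have -> : W ^+ 2 - (B ^+ 2 * y ^+ p)%:P * Y = (Y ^+ p - (y ^+ p)%:P) * (B%:P ^+ 2 * Y).
    have Y2 : (Y ^+ r) ^+ 2 = Y ^+ p * Y by rewrite -exprM (mulnC r 2) rp exprSr.
    by rewrite /W exprMn Y2 polyCM rmorphXn; ring.
  by apply: eqm0M; apply: eqm_subr0; apply: taylor_exp_pchar.
have VW : eqm 10 (V + W - 1) 0 by apply: eqm_subr0.
move: V2 W2 VW; move: (A ^+ 2 * x ^+ p) (B ^+ 2 * y ^+ p) V W => A2 B2 V W V2 W2 VW.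
have par (R : comNzRingType) (V' W' P Q : R) : (1 + P - Q) ^+ 2 - 4 * P
    = (- (V' + W' - 1) * (1 - V' + W') - (V' ^+ 2 - P) + (W' ^+ 2 - Q))
      * (1 + P - Q + 2 * V') + (V' ^+ 2 - P) * 4 by ring.
apply: (det_wronskian3_eq0
  (c := [:: 1; - (2 * B2); B2 ^+ 2; 0; - (2 * A2); - (2 * A2 * B2); 0; A2 ^+ 2])
  (G := (1 + A2%:P * X - B2%:P * Y) ^+ 2 - 4 * (A2%:P * X))).
- by exists 0%N; rewrite //= oner_eq0.
- by rewrite mon_comb3 /= !polyC0 !polyCN !polyCM ?rmorphXn polyC1 !rmorph_nat; ring.
rewrite (par _ V W); apply: eqm0D; last exact: eqm0M.
apply: eqm0M; apply: eqm0D => //; apply: eqm0D; last by have := eqmN V2; rewrite oppr0.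
by rewrite mulNr; have := eqmN (eqm0M (1 - V + W) VW); rewrite oppr0.
Qed.

Lemma det_wronskian3_residue :
  [\/ r = 1, r = 2, r.+1 = p | 2 * r = p.+1]%N -> \det (wronskian D x y 3) = 0.
Proof.
case; [exact: det_wronskian3_line | exact: det_wronskian3_conic
      | exact: det_wronskian3_hyperbola | exact: det_wronskian3_parabola].
Qed.
End FermatCurve.

Unset Implicit Arguments.

Theorem lemma3p2 (p h n : nat) (a b : Fbar p) (L : fieldType)
  (iota : {rmorphism Fbar p -> L}) (x y : L) (D : nat -> L -> L) :
  prime p -> (7 < p)%N -> (0 < h)%N -> (3 < n)%N ->
  a ^+ (p ^ h) = a -> b ^+ (p ^ h) = b ->
  irreducible_elt (fermat_poly a b n) ->
  iota a * x ^+ n + iota b * y ^+ n = 1 ->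
  generated_by iota x y ->
  hasse_wrt iota x D ->
  nonclassical D x y 1 \/ nonclassical D x y 2 ->
  nonclassical D x y 3.
Proof.
move=> pp p7 _ n3 _ _ irr curve _ hD ncl12.
have pcharLp : p \in [pchar L] := rmorph_pchar iota (pchar_Fbar pp).
have p10 : (10 < p)%N.
  have [//|p_le10] := ltnP 10 p.
  have : [|| p == 8, p == 9 | p == 10]%N by lia.
  by case/or3P => /eqP p_eq; rewrite p_eq in pp.
have n0 : (0 < n)%N by apply: leq_trans n3.
have pn := fermat_poly_irr_pchar_ndvd pp n0 irr.
have det0 s : nonclassical D x y s -> \det (wronskian D x y s) = 0.
  by move=> ncl; apply/eqP; apply/negPn/negP => /classicalP.
rewrite /nonclassical classicalP; apply/negP; rewrite negbK; apply/eqP.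
have [a0 | a0] := eqVneq a 0; first exact: det_wronskian3_a0 pcharLp p10 n0 pn curve hD a0.
apply: (det_wronskian3_residue pcharLp p10 curve hD).
apply: (special_residue pcharLp) => //; first exact: leq_trans p7.
case: ncl12 => /det0 hs; last exact: nonclassical2_residue pcharLp p10 n0 pn curve hD a0 hs.
by rewrite (nonclassical1_n1 pcharLp p10 n0 pn curve hD a0 hs) subrr expr0n /= !mul0r.
Qed.
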